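(* Let $p(L,M,D;\mu=1)$ be a generative reasoning model, let $\alpha\in L$, and let $\Delta\subseteq L$ be a finite set such that $[\![\Delta]\!]=[\![\Delta]\!]_p$ and $[\![\Delta]\!]\neq\emptyset$. Then $p(\alpha\mid\Delta)=1$ if and only if $\Delta\models\alpha$.
   Context: Fix a multiset of data $\{d_1,\dots,d_K\}$ with $K\ge1$, and a propositional language $L$ over finitely many atoms, with set of models (truth assignments) $\mathcal M$. A function $m:\{d_1,\dots,d_K\}\to\mathcal M$ assigns to each datum the model it supports. The probability of a model $n$ is $p(n)=|\{k:m(d_k)=n\}|/K$. For a parameter $\mu\in[0,1]$ and $\alpha\in L$, set $p(\alpha\mid m)=\mu$ if $m$ satisfies $\alpha$ and $1-\mu$ otherwise. For finite $\Delta\subseteq L$, set $p(\Delta\mid m)=\prod_{\beta\in\Delta}p(\beta\mid m)$, which is $1$ for empty $\Delta$. Define $$p(\alpha\mid\Delta)=\frac{\sum_{m}p(\alpha\mid m)p(\Delta\mid m)p(m)}{\sum_m p(\Delta\mid m)p(m)}.$$ This is the generative reasoning model $p(L,M,D;\mu)$. For $\mu=1$ the expression is evaluated at $\mu=1$, and it is undefined when the denominator is $0$. Notation: - $[\![\Delta]\!]$ is the set of models satisfying every formula in $\Delta$, and $[\![\alpha]\!]=[\![\{\alpha\}]\!]$. - $[\![\Delta]\!]_p=\{m\in[\![\Delta]\!]:p(m)\neq0\}$. - $\Delta\models\alpha$ (classical consequence) means $[\![\Delta]\!]\subseteq[\![\alpha]\!]$. *)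

From HB Require Import structures.
From mathcomp Require Import all_boot all_order all_algebra.
Set Implicit Arguments. Unset Strict Implicit. Unset Printing Implicit Defensive.
Import Order.TTheory GRing.Theory Num.Theory.
Local Open Scope ring_scope.

Inductive pform (A : Type) : Type :=
| Atom of A
| Bot
| Top
| Neg of pform A
| And of pform A & pform A
| Or of pform A & pform A
| Imp of pform A & pform A.

Definition pform_eq_dec (A : eqType) (f g : pform A) : {f = g} + {f <> g}.
Proof. decide equality; match goal with |- sumbool (?x = ?y) _ => case: (eqVneq x y) => [->|/eqP]; [left|right] end; done. Defined.

Definition pform_eqb (A : eqType) (f g : pform A) : bool :=
  if pform_eq_dec f g then true else false.
Lemma pform_eqP (A : eqType) : Equality.axiom (@pform_eqb A).
Proof. by move=> f g; rewrite /pform_eqb; case: pform_eq_dec => h; constructor. Qed.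
HB.instance Definition _ (A : eqType) := hasDecEq.Build (pform A) (@pform_eqP A).

Definition tmodel (A : finType) := {ffun A -> bool}.

Fixpoint sat (A : finType) (n : tmodel A) (f : pform A) : bool :=
  match f with
  | Atom a => n a
  | Bot => false
  | Top => true
  | Neg g => ~~ sat n g
  | And g h => sat n g && sat n h
  | Or g h => sat n g || sat n h
  | Imp g h => sat n g ==> sat n h
  end.

Definition models_of (A : finType) (Delta : seq (pform A)) : {set tmodel A} :=
  [set n : tmodel A | all (sat n) Delta].

Definition entails (A : finType) (Delta : seq (pform A)) (alpha : pform A) : Prop :=
  models_of Delta \subset models_of [:: alpha].

Section GRM.
Variables (R : realFieldType) (A : finType) (K : nat).
(* data d_1..d_K are indexed by 'I_K; m assigns to each datum its tmodel *)
Variable (m : 'I_K -> tmodel A).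

Definition pmodel (n : tmodel A) : R := #|[set k | m k == n]|%:R / K%:R.

Definition models_of_p (Delta : seq (pform A)) : {set tmodel A} :=
  [set n in models_of Delta | pmodel n != 0].

Definition p_form_model (mu : R) (alpha : pform A) (n : tmodel A) : R :=
  if sat n alpha then mu else 1 - mu.

Definition p_set_model (mu : R) (Delta : seq (pform A)) (n : tmodel A) : R :=
  \prod_(b <- Delta) p_form_model mu b n.

Definition p_cond (mu : R) (alpha : pform A) (Delta : seq (pform A)) : R :=
  (\sum_(n : tmodel A) p_form_model mu alpha n * p_set_model mu Delta n * pmodel n)
  / (\sum_(n : tmodel A) p_set_model mu Delta n * pmodel n).
End GRM.

From mathcomp Require Import all_boot all_order all_algebra.
Set Implicit Arguments. Unset Strict Implicit. Unset Printing Implicit Defensive.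
Import Order.TTheory GRing.Theory Num.Theory.
Local Open Scope ring_scope.

(* At mu = 1 the likelihood p(Delta | n) is the indicator of [[Delta]], so
   p(alpha | Delta) is the p-mass of [[Delta]] /\ [[alpha]] divided by the
   p-mass of [[Delta]].  Every model of Delta carries positive mass, so this
   ratio is 1 exactly when no model of Delta falsifies alpha. *)

Lemma partial_sum_ratio_eq1 (R : numFieldType) (T : finType) (S : {set T})
    (P : pred T) (w : T -> R) :
  {in S, forall n, 0 < w n} -> S != set0 ->
  (\sum_(n in S | P n) w n) / (\sum_(n in S) w n) = 1 <-> {subset S <= P}.
Proof.
move=> w_gt0 /set0Pn[n0 Sn0].
have sum_gt0 : 0 < \sum_(n in S) w n.
  rewrite (bigD1 n0) //=; apply: (lt_le_trans (w_gt0 _ Sn0)).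
  by rewrite lerDl sumr_ge0 // => n /andP[Sn _]; exact/ltW/w_gt0.
split=> [/divr1_eq sumP_eq n Sn | SP].
- have sum_notP0 : \sum_(n in S | ~~ P n) w n = 0.
    by apply: (addrI (\sum_(n in S | P n) w n)); rewrite addr0 -bigID.
  apply/negPn/negP => notPn.
  have w_ge0 i : (i \in S) && ~~ P i -> 0 <= w i by case/andP=> /w_gt0/ltW.
  have := psumr_eq0P w_ge0 sum_notP0 (i := n); rewrite Sn notPn => /(_ isT) wn0.
  by move: (w_gt0 _ Sn); rewrite wn0 ltxx.
- have -> : \sum_(n in S | P n) w n = \sum_(n in S) w n.
    by apply: eq_bigl => n; case: (boolP (n \in S)) => //= /SP.
  by rewrite divff ?gt_eqF.
Qed.

Section GenerativeModelAtOne.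
Variables (R : realFieldType) (At : finType) (K : nat) (m : 'I_K -> tmodel At).

Lemma p_form_model1 (b : pform At) (n : tmodel At) :
  p_form_model (1 : R) b n = (sat n b)%:R.
Proof. by rewrite /p_form_model; case: (sat n b); rewrite ?subrr. Qed.

Lemma p_set_model1 (Delta : seq (pform At)) (n : tmodel At) :
  p_set_model (1 : R) Delta n = (n \in models_of Delta)%:R.
Proof.
rewrite /p_set_model inE; elim: Delta => [|b Delta IH]; first by rewrite big_nil.
by rewrite big_cons IH p_form_model1 /=; case: (sat n b); rewrite ?mul1r ?mul0r.
Qed.

Lemma p_cond1 (alpha : pform At) (Delta : seq (pform At)) :
  p_cond m (1 : R) alpha Delta =
  (\sum_(n in models_of Delta | sat n alpha) pmodel R m n)
    / (\sum_(n in models_of Delta) pmodel R m n).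
Proof.
rewrite /p_cond; congr (_ / _); rewrite [RHS]big_mkcond /=; apply: eq_bigr => n _;
  rewrite p_set_model1 ?p_form_model1;
  by case: (n \in models_of Delta); case: (sat n alpha); rewrite /= ?mul1r ?mul0r.
Qed.

Lemma pmodel_ge0 (n : tmodel At) : 0 <= pmodel R m n.
Proof. by rewrite /pmodel divr_ge0 ?ler0n. Qed.

Lemma models_of_p_pmodel_gt0 (Delta : seq (pform At)) :
  {in models_of_p R m Delta, forall n, 0 < pmodel R m n}.
Proof. by move=> n; rewrite inE => /andP[_ pn_neq0]; rewrite lt0r pn_neq0 pmodel_ge0. Qed.

End GenerativeModelAtOne.

Lemma entailsP (At : finType) (Delta : seq (pform At)) (alpha : pform At) :
  entails Delta alpha <-> {subset models_of Delta <= [pred n | sat n alpha]}.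
Proof.
have models_alpha n : (n \in models_of [:: alpha]) = sat n alpha.
  by rewrite inE /= andbT.
rewrite /entails; split=> [/subsetP sub n /sub | sub]; first by rewrite models_alpha.
by apply/subsetP => n /sub; rewrite models_alpha.
Qed.

Theorem corollary1 (R : realFieldType) (At : finType) (K : nat) (hK : (0 < K)%N)
  (m : 'I_K -> tmodel At) (alpha : pform At) (Delta : seq (pform At))
  (hDuniq : uniq Delta)
  (hDp : models_of Delta = models_of_p R m Delta)
  (hDne : models_of Delta != set0) :
  p_cond m (1 : R) alpha Delta = 1 <-> entails Delta alpha.
Proof.
rewrite p_cond1; apply: (iff_trans _ (iff_sym (entailsP Delta alpha))).
apply: partial_sum_ratio_eq1 hDne.
by rewrite {1}hDp; exact: models_of_p_pmodel_gt0.
Qed.
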